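(* For every $\rho$ with $\frac32<\rho<2$ there exists $a$ with $\frac12<a<1$ such that $${}_1F_2\left(a\,;\rho a,\,\rho a+\tfrac12\,;-\tfrac{x^2}{4}\right)>0\quad\text{for all } x>0.$$
   Context: For $a,b,c>0$, ${}_1F_2\left(a\,;b,c\,;-\frac{x^2}{4}\right)=\sum_{k=0}^\infty \frac{(a)_k}{k!\,(b)_k(c)_k}\left(-\frac{x^2}{4}\right)^k$, where $(\alpha)_k=\Gamma(\alpha+k)/\Gamma(\alpha)$. *)

From Stdlib Require Import Reals.
From Coquelicot Require Import Coquelicot.
Open Scope R_scope.

Fixpoint pochhammer (alpha : R) (k : nat) : R :=
  match k with
  | O => 1
  | S k' => pochhammer alpha k' * (alpha + INR k')
  end.

Definition hyp1F2_term (a b c z : R) (k : nat) : R :=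
  pochhammer a k / (INR (Factorial.fact k) * pochhammer b k * pochhammer c k) * z ^ k.

Definition hyp1F2 (a b c z : R) : R := Series (hyp1F2_term a b c z).

From Stdlib Require Import Reals Factorial Lra Lia.
From Coquelicot Require Import Coquelicot.
Open Scope R_scope.

(* With a = 3/(2 rho) the parameters become (a; 3/2, 2).  The coefficients of
   (sin u / u)^2 = 1F2(1; 3/2, 2; -u^2) are 1/((3/2)_k (2)_k), and (a)_k / k! is the
   k-th moment of w(s) = s^(a-1) (1-s)^(-a) on (0,1) divided by its total mass, so
   1F2(a; 3/2, 2; -y^2) is a positive multiple of the integral of
   w(s) (sin (y sqrt s) / (y sqrt s))^2, which is positive.
   To work with proper integrals only, integrate over [e, 1-e] instead: integrating
   d/ds (s^(k+a) (1-s)^(1-a)) = w(s) ((k+a) s^k - (k+1) s^(k+1)) shows that the truncated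
   moments m_k satisfy |m_k - (a)_k/k! m_0| <= k e^(1-a), hence the truncated integral
   differs from m_0 1F2(a; 3/2, 2; -y^2) by at most e^(1-a) exp(y^2), while it stays
   above a positive bound independent of e; a small e then forces 1F2 > 0. *)

Lemma is_series_Rabs_le (u v : nat -> R) (lu lv : R) :
  (forall n, Rabs (u n) <= v n) -> is_series u lu -> is_series v lv -> Rabs lu <= lv.
Proof.
  intros Huv Hu Hv.
  assert (Hexv : ex_series v) by (exists lv; exact Hv).
  assert (Hexu : ex_series (fun n => Rabs (u n))).
  { apply (@ex_series_le R_AbsRing R_CompleteNormedModule _ v); [|exact Hexv].
    intros n; rewrite Rabs_Rabsolu; apply Huv. }
  rewrite <- (is_series_unique _ _ Hu), <- (is_series_unique _ _ Hv).
  eapply Rle_trans; [apply Series_Rabs, Hexu|].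
  apply Series_le; [|exact Hexv].
  intros n; split; [apply Rabs_pos | apply Huv].
Qed.

Lemma is_series_tail (u : nat -> R) (l : R) N :
  is_series u l -> is_series (fun k => u (S N + k)%nat) (l - sum_n u N).
Proof.
  intros Hu; apply is_series_incr_n; [lia|].
  change (is_series u (l - sum_n u N + sum_n u N)).
  now replace (l - sum_n u N + sum_n u N) with l by ring.
Qed.

Lemma is_series_tail_Rabs_le (u v : nat -> R) (lu lv : R) N :
  (forall n, Rabs (u n) <= v n) -> is_series u lu -> is_series v lv ->
  Rabs (lu - sum_n u N) <= lv - sum_n v N.
Proof.
  intros Huv Hu Hv.
  exact (is_series_Rabs_le _ _ _ _ (fun k => Huv _)
           (is_series_tail _ _ N Hu) (is_series_tail _ _ N Hv)).
Qed.

Lemma is_lim_seq_series_tail (u : nat -> R) (l : R) :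
  is_series u l -> is_lim_seq (fun N => l - sum_n u N) 0.
Proof.
  intros Hu; replace (Finite 0) with (Finite (l - l)) by (f_equal; ring).
  exact (is_lim_seq_minus' _ _ _ _ (is_lim_seq_const l) Hu).
Qed.

Lemma is_RInt_sum_n (f : nat -> R -> R) (I : nat -> R) (a b : R) N :
  (forall k, is_RInt (f k) a b (I k)) ->
  is_RInt (fun x => sum_n (fun k => f k x) N) a b (sum_n I N).
Proof.
  intros Hf; induction N as [|N IH].
  - rewrite sum_O; eapply is_RInt_ext; [|exact (Hf 0%nat)]; intros x _; now rewrite sum_O.
  - rewrite sum_Sn; eapply is_RInt_ext; [|exact (is_RInt_plus _ _ _ _ _ _ IH (Hf (S N)))].
    intros x _; now rewrite sum_Sn.
Qed.

Lemma Rpower_pos x y : 0 < Rpower x y.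
Proof. apply exp_pos. Qed.

Lemma Rle_Rpower_base_le_1 x y z : 0 < x <= 1 -> y <= z -> Rpower x z <= Rpower x y.
Proof.
  intros Hx Hyz; unfold Rpower.
  assert (ln x <= 0) by (rewrite <- ln_1; apply ln_le; lra).
  destruct (Rle_lt_or_eq_dec (z * ln x) (y * ln x)) as [Hlt | ->]; [nra | | lra].
  now left; apply exp_increasing.
Qed.

Lemma Rpower_le_1 x y : 0 < x <= 1 -> 0 <= y -> Rpower x y <= 1.
Proof. intros; rewrite <- (Rpower_O x) by lra; apply Rle_Rpower_base_le_1; lra. Qed.

Lemma Rpower_ge_1 x y : 0 < x <= 1 -> y <= 0 -> 1 <= Rpower x y.
Proof. intros; rewrite <- (Rpower_O x) at 1 by lra; apply Rle_Rpower_base_le_1; lra. Qed.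

Definition exp_term (q : R) (k : nat) : R := q ^ k / INR (fact k).

Lemma is_series_exp_term q : is_series (exp_term q) (exp q).
Proof.
  eapply is_series_ext; [|exact (is_exp_Reals q)].
  intros k; unfold exp_term; simpl; unfold scal; simpl; unfold mult; simpl.
  rewrite pow_n_pow; unfold Rdiv; ring.
Qed.

Lemma pochhammer_pos b k : 0 < b -> 0 < pochhammer b k.
Proof.
  intros Hb; induction k as [|k IH]; simpl; [lra|].
  assert (0 <= INR k) by apply pos_INR; nra.
Qed.

Lemma pochhammer_ge_1 b k : 1 <= b -> 1 <= pochhammer b k.
Proof.
  intros Hb; induction k as [|k IH]; simpl; [lra|].
  assert (0 <= INR k) by apply pos_INR; nra.
Qed.

Lemma pochhammer_2 k : pochhammer 2 k = INR (fact (S k)).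
Proof.
  induction k as [|k IH]; [simpl; lra|].
  rewrite (fact_simpl (S k)), mult_INR, <- IH, !S_INR; simpl; ring.
Qed.

(* The duplication formula (b)_k (b + 1/2)_k 4^k = (2b)_(2k) at b = 3/2. *)
Lemma pochhammer_3half_2 k :
  2 * 4 ^ k * (pochhammer (3/2) k * pochhammer 2 k) = INR (fact (2 * k + 2)).
Proof.
  induction k as [|k IH]; [simpl; lra|].
  replace (2 * S k + 2)%nat with (S (S (2 * k + 2))) by lia.
  rewrite !fact_simpl, !mult_INR, <- IH, !S_INR, plus_INR, mult_INR; simpl; field.
Qed.

Definition beta_moment (a : R) (k : nat) : R := pochhammer a k / INR (fact k).

Lemma beta_moment_succ a k :
  beta_moment a (S k) * (INR k + 1) = beta_moment a k * (INR k + a).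
Proof.
  unfold beta_moment; simpl pochhammer.
  rewrite fact_simpl, mult_INR, S_INR.
  assert (h := INR_fact_lt_0 k); assert (h1 := pos_INR k).
  field; lra.
Qed.

Lemma beta_moment_bounds a k : 0 <= a <= 1 -> 0 <= beta_moment a k <= 1.
Proof.
  intros Ha; induction k as [|k IH]; [unfold beta_moment; simpl; lra|].
  assert (Hr := beta_moment_succ a k); assert (h := pos_INR k).
  split; nra.
Qed.

Definition sinc2_coef (k : nat) : R := / (pochhammer (3/2) k * pochhammer 2 k).

Lemma hyp1F2_term_3half_2 a z k :
  hyp1F2_term a (3/2) 2 z k = beta_moment a k * sinc2_coef k * z ^ k.
Proof.
  unfold hyp1F2_term, beta_moment, sinc2_coef.
  assert (h1 := pochhammer_pos (3/2) k ltac:(lra)).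
  assert (h2 := pochhammer_pos 2 k ltac:(lra)).
  assert (h3 := INR_fact_lt_0 k).
  field; repeat split; lra.
Qed.

Lemma sinc2_coef_pos k : 0 < sinc2_coef k.
Proof.
  assert (h1 := pochhammer_pos (3/2) k ltac:(lra)).
  assert (h2 := pochhammer_pos 2 k ltac:(lra)).
  apply Rinv_0_lt_compat; nra.
Qed.

Lemma sinc2_coef_fact k : sinc2_coef k = 2 * 4 ^ k / INR (fact (2 * k + 2)).
Proof.
  unfold sinc2_coef; rewrite <- pochhammer_3half_2.
  assert (h1 := pochhammer_pos (3/2) k ltac:(lra)).
  assert (h2 := pochhammer_pos 2 k ltac:(lra)).
  assert (0 < 4 ^ k) by (apply pow_lt; lra).
  field; repeat split; lra.
Qed.

Lemma sinc2_coef_le k : (INR k + 1) * sinc2_coef k <= / INR (fact k).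
Proof.
  assert (h1 := pochhammer_ge_1 (3/2) k ltac:(lra)).
  assert (h2 := INR_fact_lt_0 k); assert (h3 := pos_INR k).
  replace ((INR k + 1) * sinc2_coef k) with (/ (pochhammer (3/2) k * INR (fact k))).
  - apply Rinv_le_contravar; nra.
  - unfold sinc2_coef; rewrite pochhammer_2, fact_simpl, mult_INR, S_INR.
    field; repeat split; lra.
Qed.

Lemma sinc2_term_bound k t q :
  Rabs t <= q -> (INR k + 1) * Rabs (sinc2_coef k * t ^ k) <= exp_term q k.
Proof.
  intros Ht.
  rewrite Rabs_mult, <- RPow_abs, (Rabs_pos_eq (sinc2_coef k)) by (left; apply sinc2_coef_pos).
  assert (hc := sinc2_coef_le k); assert (hc0 := sinc2_coef_pos k).
  assert (hp : 0 <= Rabs t ^ k) by (apply pow_le, Rabs_pos).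
  assert (Rabs t ^ k <= q ^ k) by (apply pow_incr; split; [apply Rabs_pos | exact Ht]).
  assert (hk := pos_INR k).
  assert (0 < / INR (fact k)) by (apply Rinv_0_lt_compat, INR_fact_lt_0).
  unfold exp_term, Rdiv; nra.
Qed.

Definition sinc2 (u : R) : R := (sin u / u) ^ 2.

Lemma is_series_sinc2 u :
  u <> 0 -> is_series (fun k => sinc2_coef k * (- u ^ 2) ^ k) (sinc2 u).
Proof.
  intros Hu.
  assert (Hcos : is_series (fun i => cos_n i * Rsqr (2 * u) ^ i) (cos (2 * u))).
  { unfold cos; destruct (exist_cos _) as [c Hc]; apply is_series_Reals, Hc. }
  (* (sin u / u)^2 = (1 - cos (2 u)) / (2 u^2) *)
  assert (Htail := is_series_scal (- / (2 * u ^ 2)) _ _ (is_series_tail _ _ 0 Hcos)).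
  replace (sinc2 u) with
    (scal (- / (2 * u ^ 2)) (cos (2 * u) - sum_n (fun i => cos_n i * Rsqr (2 * u) ^ i) 0)).
  2:{ rewrite sum_O, cos_2a_sin; unfold sinc2, cos_n, scal; simpl; unfold mult; simpl.
      unfold Rsqr; field; exact Hu. }
  revert Htail; apply is_series_ext; intros k.
  change (scal ?c ?x) with (c * x); cbn [Nat.add].
  rewrite sinc2_coef_fact; unfold cos_n, Rsqr.
  replace (2 * S k)%nat with (2 * k + 2)%nat by lia.
  replace (2 * u * (2 * u)) with (4 * u ^ 2) by ring.
  replace ((- u ^ 2) ^ k) with ((-1) ^ k * (u ^ 2) ^ k)
    by (rewrite <- Rpow_mult_distr; f_equal; ring).
  rewrite Rpow_mult_distr; simpl.
  field; split; [apply INR_fact_neq_0 | exact Hu].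
Qed.

Lemma sinc2_ge_quarter u : 0 < u <= 1 -> 1/4 <= sinc2 u.
Proof.
  intros Hu; assert (HP := PI2_1).
  destruct (sin_bound u 0 ltac:(lra) ltac:(lra)) as [Hsin _].
  replace (sin_approx u (2 * 0 + 1)) with (u - u ^ 3 / 6) in Hsin
    by (unfold sin_approx, sin_term; simpl; field).
  assert (5/6 <= sin u / u).
  { apply (Rmult_le_reg_r u); [lra|].
    replace (sin u / u * u) with (sin u) by (field; lra); nra. }
  unfold sinc2; nra.
Qed.

Definition beta_weight (a s : R) : R := Rpower s (a - 1) * Rpower (1 - s) (- a).

Lemma beta_weight_ge_1 a s : 0 <= a <= 1 -> 0 < s < 1 -> 1 <= beta_weight a s.
Proof.
  intros Ha Hs; unfold beta_weight.
  assert (1 <= Rpower s (a - 1)) by (apply Rpower_ge_1; lra).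
  assert (1 <= Rpower (1 - s) (- a)) by (apply Rpower_ge_1; lra).
  nra.
Qed.

Lemma beta_weight_continuous a s : 0 < s < 1 -> continuous (beta_weight a) s.
Proof.
  intros Hs; apply (ex_derive_continuous (beta_weight a)); unfold beta_weight, Rpower.
  auto_derive; repeat split; lra.
Qed.

Definition beta_primitive (a : R) (k : nat) (s : R) : R :=
  Rpower s (INR k + a) * Rpower (1 - s) (1 - a).

Lemma is_derive_beta_primitive a k s : 0 < s < 1 ->
  is_derive (beta_primitive a k) s
    (beta_weight a s * ((INR k + a) * s ^ k - (INR k + 1) * s ^ S k)).
Proof.
  intros Hs; unfold beta_primitive.
  assert (E1 : Rpower s (INR k + a) = s ^ S k * Rpower s (a - 1)).
  { rewrite <- Rpower_pow, <- Rpower_plus by lra; f_equal; rewrite S_INR; ring. }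
  assert (E2 : Rpower (1 - s) (1 - a) = (1 - s) * Rpower (1 - s) (- a)).
  { rewrite <- (Rpower_1 (1 - s)) at 2 by lra; rewrite <- Rpower_plus; f_equal; ring. }
  unfold Rpower in E1, E2; unfold beta_weight, Rpower.
  auto_derive; [repeat split; lra|].
  replace (1 + - s) with (1 - s) by ring; rewrite E1, E2; simpl; field; lra.
Qed.

Section TruncatedMoments.

Variables a e : R.
Hypothesis Ha : 1/2 <= a <= 1.
Hypothesis He : 0 < e < 1/2.

Definition trunc_moment (k : nat) : R := RInt (fun s => beta_weight a s * s ^ k) e (1 - e).

Lemma ex_RInt_beta_weight_mul (f : R -> R) :
  (forall s, e <= s <= 1 - e -> continuous f s) ->
  ex_RInt (fun s => beta_weight a s * f s) e (1 - e).
Proof.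
  intros Hf; apply (@ex_RInt_continuous R_CompleteNormedModule).
  rewrite Rmin_left, Rmax_right by lra; intros s Hs.
  apply (continuous_mult (beta_weight a) f); [apply beta_weight_continuous; lra | apply Hf; lra].
Qed.

Lemma is_RInt_trunc_moment k :
  is_RInt (fun s => beta_weight a s * s ^ k) e (1 - e) (trunc_moment k).
Proof.
  apply (@RInt_correct R_CompleteNormedModule), ex_RInt_beta_weight_mul; intros s _.
  apply (ex_derive_continuous (fun s => s ^ k)); auto_derive; auto.
Qed.

Lemma trunc_moment_0_ge_0 : 0 <= trunc_moment 0.
Proof.
  apply RInt_ge_0; [lra | exact (ex_intro _ _ (is_RInt_trunc_moment 0)) |].
  intros s Hs; simpl; rewrite Rmult_1_r.
  assert (1 <= beta_weight a s) by (apply beta_weight_ge_1; lra); lra.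
Qed.

Lemma trunc_moment_succ k :
  (INR k + a) * trunc_moment k - (INR k + 1) * trunc_moment (S k) =
  beta_primitive a k (1 - e) - beta_primitive a k e.
Proof.
  set (f s := beta_weight a s * ((INR k + a) * s ^ k - (INR k + 1) * s ^ S k)).
  assert (Hprim : is_RInt f e (1 - e) (beta_primitive a k (1 - e) - beta_primitive a k e)).
  { apply (is_RInt_derive (beta_primitive a k)); rewrite Rmin_left, Rmax_right by lra;
      intros s Hs.
    - apply is_derive_beta_primitive; lra.
    - apply (ex_derive_continuous f); unfold f, beta_weight, Rpower.
      auto_derive; repeat split; lra. }
  assert (Hmom : is_RInt f e (1 - e)
                   ((INR k + a) * trunc_moment k - (INR k + 1) * trunc_moment (S k))).
  { refine (is_RInt_ext _ _ _ _ _ _ (is_RInt_minus _ _ _ _ _ _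
      (is_RInt_scal _ _ _ (INR k + a) _ (is_RInt_trunc_moment k))
      (is_RInt_scal _ _ _ (INR k + 1) _ (is_RInt_trunc_moment (S k))))).
    intros s _; unfold f, minus, plus, opp, scal; simpl; unfold mult; simpl; ring. }
  rewrite <- (is_RInt_unique _ _ _ _ Hmom); exact (is_RInt_unique _ _ _ _ Hprim).
Qed.

Lemma beta_primitive_boundary_le k :
  Rabs (beta_primitive a k (1 - e) - beta_primitive a k e) <= Rpower e (1 - a).
Proof.
  unfold beta_primitive; replace (1 - (1 - e)) with e by ring.
  assert (h0 := pos_INR k).
  assert (Rpower (1 - e) (INR k + a) <= 1) by (apply Rpower_le_1; lra).
  assert (Rpower (1 - e) (1 - a) <= 1) by (apply Rpower_le_1; lra).
  assert (Rpower e (INR k + a) <= Rpower e (1 - a)) by (apply Rle_Rpower_base_le_1; lra).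
  assert (h1 := Rpower_pos (1 - e) (INR k + a)).
  assert (h2 := Rpower_pos (1 - e) (1 - a)).
  assert (h3 := Rpower_pos e (INR k + a)).
  assert (h4 := Rpower_pos e (1 - a)).
  apply Rabs_le; split; nra.
Qed.

Lemma trunc_moment_approx k :
  Rabs (trunc_moment k - beta_moment a k * trunc_moment 0) <= INR k * Rpower e (1 - a).
Proof.
  induction k as [|k IH].
  { unfold beta_moment; simpl; rewrite Rdiv_1_r, Rmult_1_l, Rminus_diag, Rabs_R0; lra. }
  set (X k := trunc_moment k - beta_moment a k * trunc_moment 0) in *.
  change (Rabs (X k) <= INR k * Rpower e (1 - a)) in IH.
  set (B := beta_primitive a k (1 - e) - beta_primitive a k e).
  assert (Hrec : (INR k + 1) * X (S k) = (INR k + a) * X k - B).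
  { unfold X, B; rewrite <- trunc_moment_succ.
    transitivity ((INR k + 1) * trunc_moment (S k)
                  - beta_moment a (S k) * (INR k + 1) * trunc_moment 0); [ring|].
    rewrite beta_moment_succ; ring. }
  assert (HB := beta_primitive_boundary_le k); fold B in HB.
  assert (h0 := pos_INR k); assert (hX := Rabs_pos (X k)).
  assert (Habs : (INR k + 1) * Rabs (X (S k)) <= (INR k + a) * Rabs (X k) + Rabs B).
  { replace ((INR k + 1) * Rabs (X (S k))) with (Rabs ((INR k + a) * X k - B))
      by (rewrite <- Hrec, Rabs_mult, (Rabs_right (INR k + 1)); lra).
    unfold Rminus; eapply Rle_trans; [apply Rabs_triang|].
    rewrite Rabs_Ropp, Rabs_mult, (Rabs_right (INR k + a)) by lra; lra. }
  change (Rabs (X (S k)) <= INR (S k) * Rpower e (1 - a)); rewrite S_INR.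
  assert (hp := Rpower_pos e (1 - a)).
  apply (Rmult_le_reg_l (INR k + 1)); [lra | nra].
Qed.

Variable y : R.
Hypothesis Hy : 0 < y.

Definition trunc_sinc2_integral : R :=
  RInt (fun s => beta_weight a s * sinc2 (y * sqrt s)) e (1 - e).

Definition sinc2_sqrt_partial_sum (N : nat) (s : R) : R :=
  sum_n (fun k => sinc2_coef k * (- y ^ 2 * s) ^ k) N.

Lemma is_series_sinc2_sqrt s : 0 < s ->
  is_series (fun k => sinc2_coef k * (- y ^ 2 * s) ^ k) (sinc2 (y * sqrt s)).
Proof.
  intros Hs; assert (0 < sqrt s) by (apply sqrt_lt_R0; lra).
  eapply is_series_ext; [|apply is_series_sinc2; apply Rgt_not_eq; nra].
  intros k; rewrite Rpow_mult_distr, pow2_sqrt by lra; f_equal; f_equal; ring.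
Qed.

Lemma sinc2_sqrt_partial_sum_close N s : 0 < s < 1 ->
  Rabs (sinc2 (y * sqrt s) - sinc2_sqrt_partial_sum N s)
  <= exp (y ^ 2) - sum_n (exp_term (y ^ 2)) N.
Proof.
  intros Hs.
  refine (is_series_tail_Rabs_le _ _ _ _ N _ (is_series_sinc2_sqrt s ltac:(lra))
            (is_series_exp_term _)).
  intros k; assert (0 < y ^ 2) by (apply pow_lt; lra).
  assert (Hk := sinc2_term_bound k (- y ^ 2 * s) (y ^ 2)).
  assert (Rabs (- y ^ 2 * s) <= y ^ 2) by (rewrite Rabs_mult, Rabs_Ropp, !Rabs_right; nra).
  assert (h := Rabs_pos (sinc2_coef k * (- y ^ 2 * s) ^ k)); assert (h0 := pos_INR k).
  nra.
Qed.

Lemma is_RInt_sinc2_sqrt_partial_sum N :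
  is_RInt (fun s => beta_weight a s * sinc2_sqrt_partial_sum N s) e (1 - e)
    (sum_n (fun k => sinc2_coef k * (- y ^ 2) ^ k * trunc_moment k) N).
Proof.
  assert (Hterm : forall k,
    is_RInt (fun s => beta_weight a s * (sinc2_coef k * (- y ^ 2 * s) ^ k)) e (1 - e)
      (sinc2_coef k * (- y ^ 2) ^ k * trunc_moment k)).
  { intros k; eapply is_RInt_ext;
      [|exact (is_RInt_scal _ _ _ (sinc2_coef k * (- y ^ 2) ^ k) _ (is_RInt_trunc_moment k))].
    intros s _; unfold scal; simpl; unfold mult; simpl; rewrite Rpow_mult_distr; ring. }
  eapply is_RInt_ext; [|exact (is_RInt_sum_n _ _ _ _ N Hterm)].
  intros s _; exact (sum_n_mult_l (K := R_Ring) _ _ _).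
Qed.

Lemma is_RInt_trunc_sinc2_integral :
  is_RInt (fun s => beta_weight a s * sinc2 (y * sqrt s)) e (1 - e) trunc_sinc2_integral.
Proof.
  apply (@RInt_correct R_CompleteNormedModule), ex_RInt_beta_weight_mul.
  intros s Hs; assert (0 < sqrt s) by (apply sqrt_lt_R0; lra).
  apply (ex_derive_continuous (fun s => sinc2 (y * sqrt s))); unfold sinc2.
  auto_derive; repeat split; try lra; apply Rgt_not_eq; nra.
Qed.

Lemma trunc_sinc2_integral_partial_sum_close N :
  Rabs (trunc_sinc2_integral
        - sum_n (fun k => sinc2_coef k * (- y ^ 2) ^ k * trunc_moment k) N)
  <= (exp (y ^ 2) - sum_n (exp_term (y ^ 2)) N) * trunc_moment 0.
Proof.
  set (T := exp (y ^ 2) - sum_n (exp_term (y ^ 2)) N).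
  assert (Hdiff := is_RInt_minus _ _ _ _ _ _
                     is_RInt_trunc_sinc2_integral (is_RInt_sinc2_sqrt_partial_sum N)).
  assert (HT := is_RInt_scal _ _ _ T _ (is_RInt_trunc_moment 0)).
  apply Rabs_le; split;
    [ apply (is_RInt_le _ _ e (1 - e) _ _ ltac:(lra) (is_RInt_opp _ _ _ _ HT) Hdiff)
    | apply (is_RInt_le _ _ e (1 - e) _ _ ltac:(lra) Hdiff HT) ];
    intros s Hs;
    assert (Hpt := sinc2_sqrt_partial_sum_close N s ltac:(lra));
    apply Rabs_le_between in Hpt;
    assert (1 <= beta_weight a s) by (apply beta_weight_ge_1; lra);
    unfold minus, plus, opp, scal; simpl; unfold mult, opp; simpl; fold T in Hpt; nra.
Qed.

Lemma is_series_trunc_sinc2_integral :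
  is_series (fun k => sinc2_coef k * (- y ^ 2) ^ k * trunc_moment k) trunc_sinc2_integral.
Proof.
  set (S N := sum_n (fun k => sinc2_coef k * (- y ^ 2) ^ k * trunc_moment k) N).
  set (err N := (exp (y ^ 2) - sum_n (exp_term (y ^ 2)) N) * trunc_moment 0).
  assert (Herr : is_lim_seq err 0).
  { replace (Finite 0) with (Rbar_mult 0 (trunc_moment 0)) by (simpl; f_equal; ring).
    apply is_lim_seq_scal_r, is_lim_seq_series_tail, is_series_exp_term. }
  change (is_lim_seq S trunc_sinc2_integral).
  apply (is_lim_seq_le_le (fun N => trunc_sinc2_integral - err N) S
                          (fun N => trunc_sinc2_integral + err N)).
  - intros N; apply Rabs_le_between'; rewrite Rabs_minus_sym.
    apply trunc_sinc2_integral_partial_sum_close.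
  - replace (Finite trunc_sinc2_integral) with (Finite (trunc_sinc2_integral - 0))
      by (f_equal; ring).
    exact (is_lim_seq_minus' _ _ _ _ (is_lim_seq_const _) Herr).
  - replace (Finite trunc_sinc2_integral) with (Finite (trunc_sinc2_integral + 0))
      by (f_equal; ring).
    exact (is_lim_seq_plus' _ _ _ _ (is_lim_seq_const _) Herr).
Qed.

Lemma trunc_sinc2_integral_approx F :
  is_series (fun k => beta_moment a k * sinc2_coef k * (- y ^ 2) ^ k) F ->
  Rabs (trunc_sinc2_integral - trunc_moment 0 * F) <= Rpower e (1 - a) * exp (y ^ 2).
Proof.
  intros HF.
  apply (is_series_Rabs_le
           (fun k => sinc2_coef k * (- y ^ 2) ^ k
                     * (trunc_moment k - beta_moment a k * trunc_moment 0))
           (fun k => Rpower e (1 - a) * exp_term (y ^ 2) k)).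
  - intros k; rewrite Rabs_mult.
    assert (Hc := sinc2_term_bound k (- y ^ 2) (y ^ 2)).
    assert (Hm := trunc_moment_approx k).
    assert (h := Rabs_pos (sinc2_coef k * (- y ^ 2) ^ k)); assert (h0 := pos_INR k).
    assert (hp := Rpower_pos e (1 - a)).
    assert (Rabs (- y ^ 2) <= y ^ 2)
      by (rewrite Rabs_Ropp, Rabs_right; [lra | apply Rle_ge, pow2_ge_0]).
    assert (Rabs (sinc2_coef k * (- y ^ 2) ^ k)
            * Rabs (trunc_moment k - beta_moment a k * trunc_moment 0)
            <= Rabs (sinc2_coef k * (- y ^ 2) ^ k) * (INR k * Rpower e (1 - a)))
      by (apply Rmult_le_compat_l; assumption).
    nra.
  - eapply is_series_ext;
      [|exact (is_series_minus _ _ _ _ is_series_trunc_sinc2_integral (is_series_scal _ _ _ HF))].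
    intros k; unfold minus, plus, opp, scal; simpl; unfold mult, opp; simpl; ring.
  - exact (is_series_scal _ _ _ (is_series_exp_term _)).
Qed.

Lemma trunc_sinc2_integral_ge d : 0 < d <= 1/4 -> y ^ 2 * d <= 1 -> e <= d / 2 ->
  d / 8 <= trunc_sinc2_integral.
Proof.
  intros Hd Hyd Hed.
  set (f s := beta_weight a s * sinc2 (y * sqrt s)).
  assert (Hex : ex_RInt f e (1 - e)) by (eexists; exact is_RInt_trunc_sinc2_integral).
  assert (Hex1 := ex_RInt_Chasles_1 _ e d (1 - e) ltac:(lra) Hex).
  assert (Hex2 := ex_RInt_Chasles_2 _ e d (1 - e) ltac:(lra) Hex).
  unfold trunc_sinc2_integral; fold f; rewrite <- (RInt_Chasles _ e d (1 - e) Hex1 Hex2).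
  assert (Hright : 0 <= RInt f d (1 - e)).
  { apply RInt_ge_0; [lra | exact Hex2 |]; intros s Hs.
    assert (1 <= beta_weight a s) by (apply beta_weight_ge_1; lra).
    assert (0 <= sinc2 (y * sqrt s)) by apply pow2_ge_0.
    unfold f; nra. }
  assert (Hleft : RInt (fun _ => 1/4) e d <= RInt f e d).
  { apply RInt_le; [lra | apply ex_RInt_const | exact Hex1 |]; intros s Hs.
    assert (1 <= beta_weight a s) by (apply beta_weight_ge_1; lra).
    assert (0 < sqrt s) by (apply sqrt_lt_R0; lra).
    assert (Hsq : (y * sqrt s) ^ 2 = y ^ 2 * s)
      by (rewrite Rpow_mult_distr, pow2_sqrt by lra; reflexivity).
    assert (1/4 <= sinc2 (y * sqrt s)) by (apply sinc2_ge_quarter; split; nra).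
    unfold f; nra. }
  rewrite RInt_const in Hleft; change (plus ?u ?v) with (u + v).
  change (scal (d - e) (1/4)) with ((d - e) * (1/4)) in Hleft; lra.
Qed.

End TruncatedMoments.

Lemma ex_series_hyp1F2_3half_2 a z : 0 <= a <= 1 ->
  ex_series (fun k => beta_moment a k * sinc2_coef k * z ^ k).
Proof.
  intros Ha; apply (@ex_series_le R_AbsRing R_CompleteNormedModule _ (exp_term (Rabs z)));
    [|exists (exp (Rabs z)); apply is_series_exp_term].
  intros k; change (Rabs (beta_moment a k * sinc2_coef k * z ^ k) <= exp_term (Rabs z) k).
  assert (Hc := sinc2_term_bound k z (Rabs z) (Rle_refl _)).
  assert (Hr := beta_moment_bounds a k Ha); assert (h0 := pos_INR k).
  assert (h := Rabs_pos (sinc2_coef k * z ^ k)).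
  rewrite Rmult_assoc, Rabs_mult, (Rabs_pos_eq (beta_moment a k)) by lra; nra.
Qed.

Lemma exists_Rpower_le p c : 0 < p -> 0 < c -> exists e, 0 < e /\ Rpower e p <= c.
Proof.
  intros Hp Hc; exists (Rpower c (/ p)); split; [apply Rpower_pos|].
  rewrite Rpower_mult, Rinv_l, Rpower_1 by lra; lra.
Qed.

Lemma hyp1F2_3half_2_pos a y : 1/2 <= a < 1 -> 0 < y ->
  ex_series (hyp1F2_term a (3/2) 2 (- y ^ 2)) /\ hyp1F2 a (3/2) 2 (- y ^ 2) > 0.
Proof.
  intros Ha Hy; assert (Hq : 0 < y ^ 2) by (apply pow_lt; lra).
  assert (Hterm := hyp1F2_term_3half_2 a (- y ^ 2)).
  assert (Hex := ex_series_hyp1F2_3half_2 a (- y ^ 2) ltac:(lra)).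
  unfold hyp1F2; rewrite (Series_ext _ _ Hterm).
  split; [exact (ex_series_ext _ _ (fun k => eq_sym (Hterm k)) Hex)|].
  set (d := Rmin (1/4) (/ y ^ 2)).
  assert (Hd : 0 < d <= 1/4)
    by (split; [apply Rmin_glb_lt; [lra | apply Rinv_0_lt_compat, Hq] | apply Rmin_l]).
  assert (Hqd : y ^ 2 * d <= 1)
    by (rewrite <- (Rinv_r (y ^ 2)) by lra; apply Rmult_le_compat_l; [lra | apply Rmin_r]).
  assert (Hc : 0 < d / 16 / exp (y ^ 2)) by (apply Rdiv_lt_0_compat; [lra | apply exp_pos]).
  destruct (exists_Rpower_le (1 - a) _ ltac:(lra) Hc) as [e0 [He0 Hsmall]].
  set (e := Rmin (d / 2) e0).
  assert (He : 0 < e <= d / 2) by (split; [apply Rmin_glb_lt; lra | apply Rmin_l]).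
  assert (Heps : Rpower e (1 - a) * exp (y ^ 2) <= d / 16).
  { assert (Rpower e (1 - a) <= Rpower e0 (1 - a))
      by (apply Rle_Rpower_l; [lra | split; [lra | apply Rmin_r]]).
    assert (HK := exp_pos (y ^ 2)).
    apply (Rmult_le_compat_r (exp (y ^ 2))) in Hsmall; [|lra].
    replace (d / 16 / exp (y ^ 2) * exp (y ^ 2)) with (d / 16) in Hsmall by (field; lra).
    nra. }
  assert (HJ : d / 8 <= trunc_sinc2_integral a e y)
    by (apply trunc_sinc2_integral_ge; lra).
  assert (Happrox := trunc_sinc2_integral_approx a e ltac:(lra) ltac:(lra) y Hy _
                       (Series_correct _ Hex)).
  assert (H0 : 0 <= trunc_moment a e 0) by (apply trunc_moment_0_ge_0; lra).
  apply Rabs_le_between in Happrox.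
  assert (hp := Rpower_pos e (1 - a)); nra.
Qed.

Theorem corollary1 :
  forall rho : R, 3 / 2 < rho < 2 ->
  exists a : R, 1 / 2 < a < 1 /\
    forall x : R, 0 < x ->
      ex_series (hyp1F2_term a (rho * a) (rho * a + 1 / 2) (- x ^ 2 / 4)) /\
      hyp1F2 a (rho * a) (rho * a + 1 / 2) (- x ^ 2 / 4) > 0.
Proof.
  intros rho Hrho; exists (3 / (2 * rho)).
  assert (Ha : 3 / (2 * rho) * (2 * rho) = 3) by (field; lra).
  split; [split; nra|].
  intros x Hx.
  replace (rho * (3 / (2 * rho))) with (3 / 2) by (field; lra).
  replace (3 / 2 + 1 / 2) with 2 by field.
  replace (- x ^ 2 / 4) with (- (x / 2) ^ 2) by field.
  apply hyp1F2_3half_2_pos; nra.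
Qed.
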